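(* Let $\mathcal{G}=(\mathcal{V},\mathcal{E})$ be a connected non-bipartite graph with node set $\mathcal{V}=\{1,\dots,N\}$, and let $\tilde{\mathcal{G}}=(\tilde{\mathcal{V}},\tilde{\mathcal{E}})$ be $\mathcal{G}$ with a self-loop added at every node, with adjacency matrix $\tilde A$ and diagonal degree matrix $\tilde D$. For $u\in\mathcal{V}$ let $\mathcal{N}(u)$ be the set of neighbours of $u$ in $\tilde{\mathcal{G}}$ and $\deg(u)=|\mathcal{N}(u)|$ (so $\tilde D=\operatorname{diag}(\deg(1),\dots,\deg(N))$). Random environment: let $\vec\xi=(\Theta^{(1)},\Theta^{(2)},\dots)$ be a sequence of independent, identically distributed random $\{0,1\}^{N\times N}$ matrices with entries $\theta^{(l)}(u,v)$, where $\theta^{(l)}(u,v)=0$ if $(u,v)\notin\tilde{\mathcal{E}}$, and for $(u,v)\in\tilde{\mathcal{E}}$, $\theta^{(l)}(u,v)$ is Bernoulli with $\mathbf P(\theta^{(l)}(u,v)=0)=\frac{1}{|\mathcal{E}|}$, $\mathbf P(\theta^{(l)}(u,v)=1)=1-\frac{1}{|\mathcal{E}|}$; for each $u$ the variables $\theta^{(l)}(u,v)$, $v\in\mathcal{N}(u)$, are independent. Let $\zeta^{(l)}_u=\sum_{v\in\mathcal{N}(u)}\theta^{(l)}(u,v)$ (so $\zeta^{(l)}_u$ is Binomial$(\deg(u),1-\frac1{|\mathcal{E}|})$), and define the random transition matrix $P(\Theta^{(l)})$ by $p(\Theta^{(l)};u,v)=\theta^{(l)}(u,v)/\zeta^{(l)}_u$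 when $\zeta^{(l)}_u>0$, and $p(\Theta^{(l)};u,\cdot)=\delta_u$ (the walk stays at $u$) when $\zeta^{(l)}_u=0$. Let $\vec V=(V_0,V_1,\dots)$ be a $\mathcal{V}$-valued process such that $(\vec V,\vec\xi)$ is a Markov chain in a random environment, i.e. for all $l\ge 1$ and $v_0,\dots,v_l\in\mathcal{V}$, $\mathbf P(V_l=v_l\mid V_0=v_0,\dots,V_{l-1}=v_{l-1},\vec\xi)=p(\Theta^{(l)};v_{l-1},v_l)$. Then, under the law $\mathbf P$ (averaging over the environment), $\vec V$ is a time-homogeneous Markov chain with transition matrix $$P_{\mathrm{drop}}=(I-\Gamma)\tilde D^{-1}\tilde A+\Gamma,\qquad \Gamma=\operatorname{diag}\Big(\tfrac{1}{|\mathcal{E}|^{\deg(1)}},\dots,\tfrac{1}{|\mathcal{E}|^{\deg(N)}}\Big).$$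
   Context: This models the DropEdge method applied to GCN: at each layer every edge of $\tilde{\mathcal G}$ is independently dropped, and message passing uses the row-normalized dropped adjacency matrix. $|\mathcal{E}|$ is the number of edges of $\mathcal{G}$. *)

From HB Require Import structures.
From mathcomp Require Import all_boot all_order all_algebra.
From mathcomp Require Import all_classical all_reals all_analysis.
Set Implicit Arguments. Unset Strict Implicit. Unset Printing Implicit Defensive.
Import Order.TTheory GRing.Theory Num.Theory.
Local Open Scope ring_scope.

Section Graph.
Variable N : nat.
Variable e : rel 'I_N.

Definition simple_graph : Prop := symmetric e /\ irreflexive e.
Definition connected_graph : Prop := forall u v : 'I_N, connect e u v.
Definition bipartite : Prop :=
  exists f : 'I_N -> bool, forall u v, e u v -> f u != f v.

Definition nedges : nat := #|[set p : 'I_N * 'I_N | e p.1 p.2 && (p.1 < p.2)%N]|.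

Definition adjt (u v : 'I_N) : bool := (u == v) || e u v.
Definition nbhd (u : 'I_N) : {set 'I_N} := [set v | adjt u v].
Definition deg (u : 'I_N) : nat := #|nbhd u|.

Variable R : realType.

Definition Atilde : 'M[R]_N := \matrix_(u, v) (adjt u v)%:R.
Definition Dtilde : 'M[R]_N := diag_mx (\row_u (deg u)%:R).
Definition Gamma : 'M[R]_N := diag_mx (\row_u ((nedges%:R)^-1 ^+ deg u)).
Definition Pdrop : 'M[R]_N :=
  (1%:M - Gamma) *m (invmx Dtilde *m Atilde) + Gamma.

Definition zeta (th : 'M[bool]_N) (u : 'I_N) : nat := \sum_(v in nbhd u) th u v.
Definition ptrans (th : 'M[bool]_N) (u v : 'I_N) : R :=
  if (0 < zeta th u)%N then (th u v)%:R / (zeta th u)%:R else (u == v)%:R.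
End Graph.

Section Events.
Context {d : measure_display} {T : measurableType d} {N : nat}.
Local Open Scope classical_set_scope.
Definition Vev (V : nat -> T -> 'I_N) (l : nat) (vs : nat -> 'I_N) : set T :=
  [set w | forall k, (k <= l)%N -> V k w = vs k].
Definition Thev (Th : nat -> T -> 'M[bool]_N) (L : nat) (ths : nat -> 'M[bool]_N)
  : set T := [set w | forall k, (1 <= k <= L)%N -> Th k w = ths k].
End Events.

(* Averaging out the environment: given V_0, ..., V_(l-1), the matrix Theta^(l) is
   still independent of the past and has the product Bernoulli law, so the step
   a -> b has probability E p(Theta^(l); a, b).  Row a keeps each of its deg(a)
   entries independently with probability 1 - q, q = 1/|E|.  With probability
   q^deg(a) it keeps none and the walk stays at a; otherwise, as the law of the
   row is invariant under transpositions of its entries, the normalized row gives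
   every neighbour the same expected mass, and these masses add up to
   1 - q^deg(a).  This is row a of (I - Gamma) D~^-1 A~ + Gamma. *)

From HB Require Import structures.
From mathcomp Require Import all_boot all_order all_algebra.
From mathcomp Require Import all_classical all_reals all_analysis.
From mathcomp Require Import finmap perm.
From mathcomp Require Import zify ring.
Import Order.TTheory GRing.Theory Num.Theory.
Local Open Scope ring_scope.
Local Open Scope classical_set_scope.
Set Implicit Arguments. Unset Strict Implicit. Unset Printing Implicit Defensive.

Section BernoulliRow.
Variables (R : numFieldType) (I : finType) (D : {set I}) (q : R).

Local Notation rows := (pffun_on false D predT).
Local Notation no_row := [ffun=> false].

Definition bern_weight (f : {ffun I -> bool}) : R :=
  \prod_(v in D) (if f v then 1 - q else q).
Definition ntrue (f : {ffun I -> bool}) : nat := \sum_(v in D) f v.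
(* [row_share f b = 0] when [ntrue f = 0], as [x / 0 = 0]. *)
Definition row_share (f : {ffun I -> bool}) (b : I) : R := (f b)%:R / (ntrue f)%:R.
Definition row_step (a : I) (f : {ffun I -> bool}) (b : I) : R :=
  if (0 < ntrue f)%N then row_share f b else (a == b)%:R.
Definition expected_share (b : I) : R :=
  \sum_(f in rows) bern_weight f * row_share f b.

Lemma rowsP (f : {ffun I -> bool}) :
  reflect (forall v, v \notin D -> f v = false) (f \in rows).
Proof.
apply: (iffP familyP) => [fD v vD | fD v].
  by have := fD v; rewrite (negbTE vD) => /eqP.
by case: ifP => // /negbT /fD ->.
Qed.

Lemma no_row_in_rows : no_row \in rows.
Proof. by apply/rowsP => v _; rewrite ffunE. Qed.

Lemma sum_bern_weight : \sum_(f in rows) bern_weight f = 1.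
Proof.
rewrite -(big_distr_big false (mem D) predT (fun _ (j : bool) => if j then 1 - q else q)).
by rewrite big1 // => v _; rewrite big_bool /= subrK.
Qed.

Lemma bern_weight_no_row : bern_weight no_row = q ^+ #|D|.
Proof. by rewrite -prodr_const; apply: eq_bigr => v _; rewrite ffunE. Qed.

Lemma ntrue_eq0 f : f \in rows -> (ntrue f == 0)%N = (f == no_row).
Proof.
move=> /rowsP fD; apply/idP/eqP => [|->]; last by rewrite /ntrue big1 // => v _; rewrite ffunE.
rewrite /ntrue sum_nat_eq0 => /forall_inP f0; apply/ffunP => v; rewrite ffunE.
by case: (boolP (v \in D)) => [/f0 | /fD //]; case: (f v).
Qed.

Lemma sum_row_share f : f \in rows -> \sum_(c in D) row_share f c = (f != no_row)%:R.
Proof.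
move=> fD; rewrite -mulr_suml -natr_sum -/(ntrue f) -(ntrue_eq0 fD).
by case: posnP => [-> | ?]; rewrite ?mul0r // divff // pnatr_eq0 -lt0n.
Qed.

Lemma expected_share_sym b c : b \in D -> c \in D -> expected_share b = expected_share c.
Proof.
move=> bD cD; pose s := tperm b c; pose swap (f : {ffun I -> bool}) := [ffun v => f (s v)].
have swapK : involutive swap by move=> f; apply/ffunP => v; rewrite !ffunE tpermK.
have Ds v : (s v \in D) = (v \in D) by rewrite /s; case: tpermP => [->|->|//]; rewrite bD cD.
have swap_rows f : (swap f \in rows) = (f \in rows).
  suff imp g : g \in rows -> swap g \in rows by apply/idP/idP => /imp //; rewrite swapK.
  by move=> /rowsP gD; apply/rowsP => v vD; rewrite ffunE gD // Ds.
have bern_weight_swap f : bern_weight (swap f) = bern_weight f.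
  rewrite /bern_weight [RHS](reindex_inj (@perm_inj _ s)).
  by apply: eq_big => v; rewrite ?Ds ?ffunE.
have ntrue_swap f : ntrue (swap f) = ntrue f.
  rewrite /ntrue [RHS](reindex_inj (@perm_inj _ s)).
  by apply: eq_big => v; rewrite ?Ds ?ffunE.
rewrite /expected_share (reindex_inj (can_inj swapK)).
apply: eq_big => f; first exact: swap_rows.
by rewrite bern_weight_swap /row_share ntrue_swap ffunE tpermL.
Qed.

Lemma sum_expected_share : \sum_(c in D) expected_share c = 1 - q ^+ #|D|.
Proof.
rewrite exchange_big /= (eq_bigr (fun f => bern_weight f * (f != no_row)%:R)); last first.
  by move=> f fD; rewrite -mulr_sumr sum_row_share.
rewrite -[in RHS]sum_bern_weight !(bigD1 _ no_row_in_rows) /= eqxx mulr0 add0r.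
rewrite bern_weight_no_row [q ^+ _ + _]addrC addrK.
by apply: eq_bigr => f /andP[_ ->]; rewrite mulr1.
Qed.

Lemma expected_share_in b : b \in D -> expected_share b = (1 - q ^+ #|D|) / #|D|%:R.
Proof.
move=> bD; have D_neq0 : #|D|%:R != 0 :> R.
  by rewrite pnatr_eq0 -lt0n card_gt0; apply/set0Pn; exists b.
rewrite -sum_expected_share (eq_bigr (fun _ => expected_share b)) => [|c cD].
  by rewrite sumr_const -[_ *+ _]mulr_natr mulfK.
exact: expected_share_sym.
Qed.

Lemma expected_row_step a b :
  \sum_(f in rows) bern_weight f * row_step a f b =
  (1 - q ^+ #|D|) * (b \in D)%:R / #|D|%:R + q ^+ #|D| * (a == b)%:R.
Proof.
have row_stepE f : f \in rows ->
    row_step a f b = row_share f b + (f == no_row)%:R * (a == b)%:R.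
  move=> fD; rewrite /row_step /row_share -(ntrue_eq0 fD).
  by case: posnP => [-> | _]; rewrite ?invr0 ?mulr0 ?mul1r ?add0r ?mul0r ?addr0.
under eq_bigr => f fD do rewrite row_stepE // mulrDr.
rewrite big_split /= -/(expected_share b) [X in _ + X](bigD1 _ no_row_in_rows) /= eqxx.
rewrite bern_weight_no_row mul1r big1 ?addr0 => [|f /andP[_ /negbTE ->]]; last first.
  by rewrite mul0r mulr0.
congr (_ + _); case: (boolP (b \in D)) => bD; first by rewrite expected_share_in // mulr1.
rewrite mulr0 mul0r /expected_share big1 // => f /rowsP fD.
by rewrite /row_share fD // mul0r mulr0.
Qed.

End BernoulliRow.

Lemma invmx_diag_mulmx (R : fieldType) n (d : 'rV[R]_n) (A : 'M[R]_n) :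
  (forall i, d 0 i != 0) -> invmx (diag_mx d) *m A = \matrix_(i, j) (A i j / d 0 i).
Proof.
move=> d_neq0; have d_unit : diag_mx d \in unitmx.
  by rewrite unitmxE det_diag unitfE; apply/prodf_neq0 => i _.
suff {1}<- : diag_mx d *m \matrix_(i, j) (A i j / d 0 i) = A by rewrite mulKmx.
by apply/matrixP => i j; rewrite mul_diag_mx !mxE mulrC divfK.
Qed.

Section Graph.
Variables (N : nat) (e : rel 'I_N) (R : realType).

Lemma mem_nbhd u v : (v \in nbhd e u) = adjt e u v.
Proof. by rewrite inE. Qed.

Lemma self_in_nbhd u : u \in nbhd e u.
Proof. by rewrite mem_nbhd /adjt eqxx. Qed.

Lemma deg_gt0 u : (0 < deg e u)%N.
Proof. by rewrite card_gt0; apply/set0Pn; exists u; exact: self_in_nbhd. Qed.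

Lemma Pdrop_entry a b : let g := (nedges e)%:R^-1 ^+ deg e a in
  Pdrop e R a b = (1 - g) * (adjt e a b)%:R / (deg e a)%:R + g * (a == b)%:R.
Proof.
rewrite /Pdrop /Dtilde invmx_diag_mulmx => [|i]; last by rewrite mxE pnatr_eq0 -lt0n deg_gt0.
rewrite mxE mulmxBl mul1mx /Gamma mul_diag_mx !mxE.
by rewrite -mulrA mulrBl mul1r mulr_natr.
Qed.

Lemma ptrans_row_step th a b :
  ptrans e R th a b = row_step R (nbhd e a) a [ffun v => th a v] b.
Proof.
rewrite /ptrans /row_step /row_share /ntrue /zeta ffunE.
by under [in RHS]eq_bigr do rewrite ffunE.
Qed.

End Graph.

Section FinitePartition.
Context {d : measure_display} {T : measurableType d} {R : realType}
  (mu : {measure set T -> \bar R}) (F : finType) (Z : T -> F).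
Hypothesis mZ : forall x, measurable [set w | Z w = x].

Lemma measurable_fin_preimage (A : set F) : measurable (Z @^-1` A).
Proof.
have -> : Z @^-1` A = \bigcup_(x in A) [set w | Z w = x].
  apply/seteqP; split => [w Aw | w [x Ax Zw]]; first by exists (Z w).
  by rewrite /preimage /= Zw.
by apply: fin_bigcup_measurable => //; exact: finite_finset.
Qed.

Lemma measure_fin_partition (X : set T) : measurable X ->
  mu X = (\sum_(x : F) mu (X `&` [set w | Z w = x]))%E.
Proof.
move=> mX; have {1}-> : X = \bigcup_(x in [set: F]) (X `&` Z @^-1` [set x]).
  by apply/seteqP; split => [w Xw | w [x _ []//]]; exists (Z w).
rewrite measure_fin_bigcup; [| exact: finite_finset | exact: trivIset_preimage1_in |
  by move=> x _; exact: measurableI mX (mZ x)].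
rewrite (fsbigTE [fset x | x : F]%fset) => [|x]; last by rewrite in_imfset.
by rewrite big_imfset //= big_enum.
Qed.

Lemma measure_fin_pushforward (G : eqType) (g : F -> G) y :
  mu [set w | g (Z w) = y] = (\sum_(x | g x == y) mu [set w | Z w = x])%E.
Proof.
rewrite (measure_fin_partition (measurable_fin_preimage (g @^-1` [set y]))).
rewrite [RHS]big_mkcond; apply: eq_bigr => x _; case: eqP => [<- | gx_neq_y].
  by congr (mu _); apply/seteqP; split => [w [] | w /= ->].
rewrite -[RHS](measure0 mu); congr (mu _).
by apply/seteqP; split => // w [/= gZw_y Zw]; apply: gx_neq_y; rewrite -Zw.
Qed.

End FinitePartition.

Section Cylinders.
Context {d : measure_display} {T : measurableType d} {N : nat}
  (Theta : nat -> T -> 'M[bool]_N) (V : nat -> T -> 'I_N).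

Lemma Thev0 ths : Thev Theta 0 ths = setT.
Proof. by apply/seteqP; split => w // _ k; lia. Qed.

Lemma ThevS_with j ths th :
  Thev Theta j.+1 [eta ths with j.+1 |-> th] =
  Thev Theta j ths `&` [set w | Theta j.+1 w = th].
Proof.
apply/seteqP; split => w /= Hw.
  split => [k hk|]; last by have := Hw j.+1; rewrite /= eqxx; apply.
  by have := Hw k; rewrite /= ifN_eq; [apply; lia | lia].
by move=> k hk /=; case: eqP => [-> | ?]; [case: Hw | apply: Hw.1; lia].
Qed.

Lemma Thev_with j ths th : Thev Theta j [eta ths with j.+1 |-> th] = Thev Theta j ths.
Proof.
by apply/seteqP; split => w /= Hw k hk; have := Hw k hk; rewrite /= ifN_eq //; lia.
Qed.

Lemma Vev0 vs : Vev V 0 vs = [set w | V 0 w = vs 0].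
Proof. by apply/seteqP; split => [w /(_ 0) | w Hw [|k] //]; apply. Qed.

Lemma VevS vs j : Vev V j.+1 vs = Vev V j vs `&` [set w | V j.+1 w = vs j.+1].
Proof.
apply/seteqP; split => w /= Hw; first by split => [k hk|]; apply: Hw; lia.
by move=> k; rewrite leq_eqVlt ltnS => /orP[/eqP -> | /Hw.1]; [case: Hw |].
Qed.

Lemma measurable_Vev (mV : forall n v, measurable [set w | V n w = v]) j vs :
  measurable (Vev V j vs).
Proof. by elim: j => [|j IH]; rewrite ?Vev0 ?VevS //; apply: measurableI. Qed.

End Cylinders.

Section RandomEnvironment.
Context (N : nat) (e : rel 'I_N) (R : realType) (d : measure_display)
  (T : measurableType d) (P : probability T R)
  (Theta : nat -> T -> 'M[bool]_N) (V : nat -> T -> 'I_N).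
Hypothesis mTheta : forall l th, measurable [set w | Theta l w = th].
Hypothesis mV : forall n v, measurable [set w | V n w = v].

Lemma fineK_measure (A : set T) : measurable A -> (fine (P A))%:E = P A.
Proof. by move=> mA; rewrite fineK // fin_num_measure. Qed.

Lemma measure_scale_Thev j (X Y : set T) (k : R) : measurable X -> measurable Y ->
  (forall ths, P (X `&` Thev Theta j ths) = (P (Y `&` Thev Theta j ths) * k%:E)%E) ->
  P X = (P Y * k%:E)%E.
Proof.
elim: j X Y => [|j IH] X Y mX mY XY.
  by have := XY (fun=> 0); rewrite Thev0 !setIT.
rewrite (measure_fin_partition _ (mTheta j.+1) mX).
rewrite (measure_fin_partition _ (mTheta j.+1) mY).
rewrite ge0_sume_distrl //; apply: eq_bigr => th _.
apply: IH => [||ths]; try exact: measurableI.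
by rewrite -!setIA ![[set w | _] `&` Thev _ _ _]setIC -!ThevS_with XY.
Qed.

Hypothesis Theta_indep : forall L ths, P (Thev Theta L ths) =
  (\prod_(1 <= k < L.+1) fine (P [set w | Theta k w = ths k]))%:E.
Hypothesis V0_indep : forall L v ths,
  P ([set w | V 0%N w = v] `&` Thev Theta L ths) =
  (P [set w | V 0%N w = v] * P (Thev Theta L ths))%E.
Hypothesis markov_env : forall l L vs ths, (1 <= l)%N -> (l <= L)%N ->
  P (Vev V l vs `&` Thev Theta L ths) =
  (P (Vev V l.-1 vs `&` Thev Theta L ths) * (ptrans e R (ths l) (vs l.-1) (vs l))%:E)%E.

Lemma measure_Vev_Thev j L vs ths : (j <= L)%N ->
  P (Vev V j vs `&` Thev Theta L ths) =
  (P [set w | V 0%N w = vs 0%N] *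
   (\prod_(1 <= k < L.+1) fine (P [set w | Theta k w = ths k]) *
    \prod_(1 <= k < j.+1) ptrans e R (ths k) (vs k.-1) (vs k))%:E)%E.
Proof.
rewrite EFinM muleA -Theta_indep -V0_indep.
elim: j => [|j IH] jL; first by rewrite Vev0 big_geq // mule1.
by rewrite markov_env //= IH 1?ltnW // [in RHS]big_nat_recr //= EFinM muleA.
Qed.

Lemma measure_Vev_ThevS m vs ths :
  P (Vev V m vs `&` Thev Theta m.+1 ths) =
  (P (Vev V m vs `&` Thev Theta m ths) *
   (fine (P [set w | Theta m.+1 w = ths m.+1]))%:E)%E.
Proof.
rewrite !measure_Vev_Thev // -muleA -EFinM [in LHS]big_nat_recr //=.
by congr (_ * _%:E)%E; ring.
Qed.

Lemma measure_Vev_step m vs th :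
  P (Vev V m.+1 vs `&` [set w | Theta m.+1 w = th]) =
  (P (Vev V m vs) *
   (fine (P [set w | Theta m.+1 w = th]) * ptrans e R th (vs m) (vs m.+1))%:E)%E.
Proof.
apply: (@measure_scale_Thev m) => [||ths].
- exact: measurableI (measurable_Vev mV _ _) (mTheta _ _).
- exact: measurable_Vev.
rewrite -setIA [[set w | _] `&` _]setIC -ThevS_with markov_env //= measure_Vev_ThevS.
by rewrite Thev_with /= eqxx EFinM muleA.
Qed.

Hypothesis Theta_off : forall l w u v, ~~ adjt e u v -> Theta l w u v = false.
Hypothesis Theta_row : forall l u (b : 'I_N -> bool), (1 <= l)%N ->
  P [set w | forall v, v \in nbhd e u -> Theta l w u v = b v] =
  (\prod_(v in nbhd e u)
     (if b v then 1 - (nedges e)%:R^-1 else (nedges e)%:R^-1) : R)%:E.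

Lemma measure_row_Theta l a (f : {ffun 'I_N -> bool}) : (1 <= l)%N ->
  P [set w | [ffun v => Theta l w a v] = f] =
  (if f \in pffun_on false (nbhd e a) predT
   then bern_weight (nbhd e a) (nedges e)%:R^-1 f else 0)%:E.
Proof.
move=> hl; case: ifP => [/rowsP f_off | f_notin_rows].
  rewrite /bern_weight -(Theta_row a f hl); congr (P _); apply/seteqP; split => w /=.
    by move=> <- v _; rewrite ffunE.
  move=> Hw; apply/ffunP => v; rewrite ffunE.
  case: (boolP (v \in nbhd e a)) => [/Hw // | vD].
  by rewrite f_off // Theta_off // -mem_nbhd.
rewrite (_ : [set w | _] = set0) ?measure0 //; apply/seteqP; split => // w /= row_w.
move/negbT/negP: f_notin_rows; apply; rewrite -row_w; apply/rowsP => v vD.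
by rewrite ffunE Theta_off // -mem_nbhd.
Qed.

Lemma expected_ptrans l a b : (1 <= l)%N ->
  \sum_(th : 'M[bool]_N) fine (P [set w | Theta l w = th]) * ptrans e R th a b =
  Pdrop e R a b.
Proof.
move=> hl; under eq_bigr do rewrite ptrans_row_step.
rewrite (partition_big (fun th : 'M[bool]_N => [ffun v => th a v]) predT) //=.
have row_law f :
    \sum_(th : 'M[bool]_N | [ffun v => th a v] == f) fine (P [set w | Theta l w = th]) =
    if f \in pffun_on false (nbhd e a) predT
    then bern_weight (nbhd e a) (nedges e)%:R^-1 f else 0.
  apply: EFin_inj; rewrite -(measure_row_Theta a f hl) -sumEFin.
  under eq_bigr do rewrite fineK_measure //.
  exact/esym/(measure_fin_pushforward _ (mTheta l)
                (fun th : 'M[bool]_N => [ffun v => th a v])).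
rewrite (eq_bigr (fun f => if f \in pffun_on false (nbhd e a) predT then
    bern_weight (nbhd e a) (nedges e)%:R^-1 f * row_step R (nbhd e a) a f b else 0)).
  by rewrite -big_mkcond /= expected_row_step Pdrop_entry mem_nbhd.
move=> f _; under eq_bigr => th /eqP row_th do rewrite row_th.
by rewrite -mulr_suml row_law; case: ifP => _; rewrite ?mul0r.
Qed.

End RandomEnvironment.

Theorem theorem8 (N : nat) (e : rel 'I_N) (R : realType)
  (d : measure_display) (T : measurableType d) (P : probability T R)
  (Theta : nat -> T -> 'M[bool]_N) (V : nat -> T -> 'I_N) :
  simple_graph e -> connected_graph e -> ~ bipartite e ->
  (* measurability of the discrete random variables *)
  (forall l th, measurable [set w | Theta l w = th]) ->
  (forall n v, measurable [set w | V n w = v]) ->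
  (* theta^(l)(u,v) = 0 off the edges of G~ *)
  (forall l w u v, ~~ adjt e u v -> Theta l w u v = false) ->
  (* each row of Theta^(l) has independent Bernoulli(1 - 1/|E|) entries on N(u) *)
  (forall l u (b : 'I_N -> bool), (1 <= l)%N ->
     P [set w | forall v, v \in nbhd e u -> Theta l w u v = b v] =
     (\prod_(v in nbhd e u)
        (if b v then 1 - (nedges e)%:R^-1 else (nedges e)%:R^-1) : R)%:E) ->
  (* Theta^(1), Theta^(2), ... are identically distributed ... *)
  (forall l th, (1 <= l)%N ->
     P [set w | Theta l w = th] = P [set w | Theta 1%N w = th]) ->
  (* ... and independent *)
  (forall L ths,
     P (Thev Theta L ths) =
     (\prod_(1 <= k < L.+1) fine (P [set w | Theta k w = ths k]))%:E) ->
  (* the initial state V_0 is independent of the environment *)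
  (forall L v ths,
     P ([set w | V 0%N w = v] `&` Thev Theta L ths) =
     (P [set w | V 0%N w = v] * P (Thev Theta L ths))%E) ->
  (* (V, xi) is a Markov chain in random environment:
     P(V_l = v_l | V_0..V_{l-1}, xi) = p(Theta^(l); v_{l-1}, v_l),
     stated on the generating pi-system of cylinder events of xi *)
  (forall l L vs ths, (1 <= l)%N -> (l <= L)%N ->
     P (Vev V l vs `&` Thev Theta L ths) =
     (P (Vev V l.-1 vs `&` Thev Theta L ths) * (ptrans e R (ths l) (vs l.-1) (vs l))%:E)%E) ->
  (* conclusion: under P, V is a time-homogeneous Markov chain with matrix Pdrop *)
  forall l vs, (1 <= l)%N ->
    P (Vev V l vs) = (P (Vev V l.-1 vs) * (Pdrop e R (vs l.-1) (vs l))%:E)%E.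
Proof.
move=> _ _ _ mTheta mV Theta_off Theta_row _ Theta_indep V0_indep markov_env [//|m] vs _.
have step := measure_Vev_step mTheta mV Theta_indep V0_indep markov_env m vs.
rewrite (measure_fin_partition P (mTheta m.+1) (measurable_Vev mV m.+1 vs)).
have Vm_fin : P (Vev V m vs) \is a fin_num by apply: fin_num_measure; exact: measurable_Vev.
rewrite (eq_bigr _ (fun th _ => step th)) -fin_num_sume_distrr //.
by rewrite sumEFin (expected_ptrans mTheta Theta_off Theta_row _ _ (ltn0Sn m)).
Qed.
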